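(* Let $S$ be a compact Riemann surface with an action of a finite group $G$ of geometric signature $(\gamma;[m_1,C_1],\ldots,[m_t,C_t])$, with branch values $q_1,\dots,q_t$ of $\pi_G$ ($q_j$ of type $C_j$), and let $H\le G$. For each $j$ fix a representative $G_j\in C_j$ and a left transversal $\Omega_{G_j}$ of $N_G(G_j)$ in $G$, and partition $\Omega_{G_j}$ into the nonempty classes $L^j_1,\ldots,L^j_{\nu_j}$ of the equivalence relation $l\sim l'\iff |lG_jl^{-1}\cap H|=|l'G_jl'^{-1}\cap H|$; choose $l_k\in L^j_k$. Set $$c^j_k:=|L^j_k|\cdot\frac{[N_G(G_j):G_j]\cdot|l_kG_jl_k^{-1}\cap H|}{|H|}.$$ Then, for each $j$ and $k$, exactly $c^j_k$ of the points of $S/H$ lying over $q_j$ (under the induced map $S/H\to S/G$) are marked with the number $|l_kG_jl_k^{-1}\cap H|$, i.e. their preimages in $S$ have stabilizer in $H$ of that order.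
   Context: $G$ acts faithfully by conformal automorphisms on $S$, with quotient map $\pi_G:S\to S/G$; $\pi_H:S\to S/H$ is the quotient by $H$. For a branch value $q$ of $\pi_G$, the stabilizers in $G$ of the points in $\pi_G^{-1}(q)$ form a complete conjugacy class $C$ of nontrivial cyclic subgroups of $G$, and $q$ is said to be of type $C$. If $q_1,\ldots,q_t$ are all the branch values of $\pi_G$, the geometric signature is $(\gamma;[m_1,C_1],\ldots,[m_t,C_t])$, with $\gamma$ the genus of $S/G$, $C_j$ the type of $q_j$, $m_j$ the order of the subgroups in $C_j$. A point of $S/H$ lying over a branch value of $\pi_G$ is a marked point of $S/H$, marked with the order of the stabilizer in $H$ of any of its preimages in $S$ (possibly $1$). *)

From HB Require Import structures.
From mathcomp Require Import all_boot all_order all_algebra all_fingroup.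
From mathcomp Require Import finmap.
Set Implicit Arguments. Unset Strict Implicit. Unset Printing Implicit Defensive.

Definition is_left_action (gT : finGroupType) (G : {group gT}) (T : Type)
    (act : gT -> T -> T) : Prop :=
  (forall x, act 1%g x = x) /\
  (forall a b x, a \in G -> b \in G -> act (a * b)%g x = act a (act b x)).

Definition faithful_action (gT : finGroupType) (G : {group gT}) (T : Type)
    (act : gT -> T -> T) : Prop :=
  forall g, g \in G -> (forall x, act g x = x) -> g = 1%g.

Definition stab_in (gT : finGroupType) (T : eqType) (H : {set gT})
    (act : gT -> T -> T) (y : T) : {set gT} :=
  [set h in H | act h y == y].

Local Open Scope fset_scope.

(* the H-orbit of y, i.e. the point of S/H determined by y *)
Definition Horbit (gT : finGroupType) (T : choiceType) (H : {set gT})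
    (act : gT -> T -> T) (y : T) : {fset T} :=
  [fset act h y | h in H].

(* the points of S/H lying over the point of S/G represented by the G-orbit
   of x0, i.e. the H-orbits contained in the G-orbit of x0 *)
Definition points_over (gT : finGroupType) (T : choiceType) (G H : {set gT})
    (act : gT -> T -> T) (x0 : T) : {fset {fset T}} :=
  [fset Horbit H act (act g x0) | g in G].

(* number of points of S/H over (the G-orbit of) x0 that are marked with the
   number d: the stabilizer in H of (any, equivalently every) preimage has
   order d *)
Definition marked_count (gT : finGroupType) (T : choiceType) (G H : {set gT})
    (act : gT -> T -> T) (x0 : T) (d : nat) : nat :=
  #|` [fset O in points_over G H act x0 |
        all (fun y => #|stab_in H act y| == d) (enum_fset O)] |.

From HB Require Import structures.
From mathcomp Require Import all_boot all_order all_algebra all_fingroup all_solvable.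
From mathcomp Require Import finmap.
Set Implicit Arguments. Unset Strict Implicit. Unset Printing Implicit Defensive.
Import GRing.Theory Num.Theory.
Local Open Scope group_scope.
Local Open Scope fset_scope.

(* The points of S/H over q_j are the H-orbits in the G-orbit of x0, and the
   H-orbit of g x0 is the image of the double coset H g Gj.  The stabilizer in H
   of g x0 is g Gj g^-1 :&: H, of order d_g, so H g Gj has |H| |Gj| / d_g
   elements.  Hence the points marked d number d / (|H| |Gj|) times the number
   of g in G with d_g = d.  As d_g only depends on the coset g N_G(Gj), there
   are |L| |N_G(Gj)| = |L| |Gj| [N_G(Gj) : Gj] such g. *)

Lemma card_fibers_sum (aT : finType) (rT : choiceType) (F : aT -> rT)
    (A : {set aT}) :
  #|A| = \sum_(v <- [fset F a | a in A]) #|[set a in A | F a == v]|.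
Proof.
set M := [fset F a | a in A].
have single a : a \in A -> (\sum_(v <- M | F a == v) 1 = 1)%N.
  move=> aA; rewrite sum1_count (@eq_count _ _ (pred1 (F a))) => [|v]; last first.
    by rewrite /= eq_sym.
  by rewrite count_uniq_mem ?fset_uniq //; have -> : F a \in M by apply/imfsetP; exists a.
rewrite -sum1_card (eq_bigr _ (fun a aA => esym (single a aA))) /=.
under eq_bigr do rewrite big_mkcond.
rewrite exchange_big /=.
apply: eq_bigr => v _; rewrite -big_mkcondr sum1dep_card.
by congr #|_|; apply/setP => a; rewrite !inE eq_sym.
Qed.

Lemma mul_card_uniform_fibers (aT : finType) (rT : choiceType) (F : aT -> rT)
    (A : {set aT}) (n c : nat) :
  {in A, forall a, n * #|[set b in A | F b == F a]| = c}%N ->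
  (n * #|A| = #|` [fset F a | a in A]| * c)%N.
Proof.
move=> uniF; rewrite (card_fibers_sum F) big_distrr /=.
rewrite (eq_big_seq (fun=> c)); last by move=> _ /imfsetP[a aA ->]; exact: uniF.
by rewrite big_const_seq count_predT iter_addn_0 mulnC.
Qed.

Section TransversalCount.
Variables (gT : finGroupType) (G N : {group gT}) (Omega : {set gT}).
Hypotheses (sNG : N \subset G) (trO : is_transversal Omega (lcosets N G) G).

Lemma transversal_lcoset_card1 g : g \in G -> #|Omega :&: g *: N| = 1%N.
Proof.
move=> gG; case/and3P: trO => _ _ /forall_inP/(_ (g *: N)) gN1.
by apply/eqP/gN1; rewrite -lcosetE imset_f.
Qed.

Lemma transversal_lcoset_exists g :
  g \in G -> exists2 x, x \in Omega & g \in x *: N.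
Proof.
move=> gG; have /eqP/cards1P[x Ox] := transversal_lcoset_card1 gG.
have /setIP[xO xgN] : x \in Omega :&: g *: N by rewrite Ox set11.
by exists x => //; rewrite (lcoset_eqP xgN) lcoset_refl.
Qed.

Lemma transversal_lcoset_uniq x y :
  x \in Omega -> y \in Omega -> x \in y *: N -> x = y.
Proof.
move=> xO yO xyN; have yG := subsetP (transversal_sub trO) y yO.
have /eqP/cards1P[z Oz] := transversal_lcoset_card1 yG.
have inz w : w \in Omega :&: y *: N -> w = z by rewrite Oz => /set1P.
apply: (@eq_trans _ _ z); first by apply: inz; rewrite inE xO.
by apply/esym/inz; rewrite inE yO lcoset_refl.
Qed.

Lemma card_transversal_rinvariant (p : pred gT) :
  {in G & N, forall g n, p (g * n) = p g} ->
  #|[set g in G | p g]| = (#|[set x in Omega | p x]| * #|N|)%N.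
Proof.
move=> pN; have sOG := transversal_sub trO.
rewrite -cardsX -(@card_in_imset _ _ (fun xn => xn.1 * xn.2)).
  apply: eq_card => g; apply/idP/imsetP.
  - case/setIdP => gG pg; have [x xO gxN] := transversal_lcoset_exists gG.
    rewrite mem_lcoset in gxN; exists (x, x^-1 * g); last by rewrite /= mulKVg.
    by rewrite !inE xO gxN /= -(pN x (x^-1 * g)) ?mulKVg ?pg ?(subsetP sOG).
  - case=> -[x n] /setXP[/setIdP[xO px] nN] -> /=.
    have xG := subsetP sOG x xO.
    by rewrite !inE groupM ?pN ?(subsetP sNG n nN).
move=> [x n] [y m] /setXP[/setIdP[xO _] nN] /setXP[/setIdP[yO _] mN] /= e.
have xy : x = y.
  apply: transversal_lcoset_uniq => //; rewrite mem_lcoset.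
  by rewrite -(mulgK n x) e -mulgA mulKg groupM ?groupV.
by move: e; rewrite xy => /mulgI ->.
Qed.

End TransversalCount.

Lemma mul_card_double_coset (gT : finGroupType) (H K : {group gT}) g :
  (#|(H * (g *: K))%g| * #|K :^ g^-1 :&: H| = #|H| * #|K|)%N.
Proof.
have -> : g *: K = K :^ g^-1 :* g.
  by apply/setP => y; rewrite mem_lcoset mem_rcoset mem_conjgV conjgE mulgKV.
by rewrite mulgA card_rcoset setIC -(cardJg K g^-1) (mul_cardG H (K :^ g^-1)%G).
Qed.

Lemma conjsgV_mulg_norm (gT : finGroupType) (K : {set gT}) g n :
  n \in 'N(K) -> K :^ (g * n)^-1 = K :^ g^-1.
Proof. by move=> nK; rewrite invMg conjsgM (normP (groupVr nK)). Qed.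

Section SubgroupOrbits.
Variables (gT : finGroupType) (G H : {group gT}).
Variables (T : choiceType) (act : gT -> T -> T).
Hypotheses (actG : is_left_action G act) (sHG : H \subset G).

Local Notation Hor := (Horbit H act).

Lemma left_act1 y : act 1 y = y.
Proof. by case: actG. Qed.

Lemma left_actM a b y : a \in G -> b \in G -> act (a * b) y = act a (act b y).
Proof. by case: actG => _; apply. Qed.

Lemma left_actKV g y : g \in G -> act g^-1 (act g y) = y.
Proof. by move=> gG; rewrite -left_actM ?groupV // mulVg left_act1. Qed.

Lemma stab_in_act (K : {set gT}) g y : K \subset G -> g \in G ->
  stab_in K act (act g y) = stab_in G act y :^ g^-1 :&: K.
Proof.
move=> sKG gG; apply/setP => h; rewrite !inE mem_conjgV inE.
case hK: (h \in K); rewrite ?andbF ?andbT //=.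
have hG := subsetP sKG h hK; have hgG : h ^ g \in G by rewrite groupJ.
rewrite hgG; apply/eqP/eqP => [fix_h | fix_hg].
- by rewrite conjgE !left_actM ?groupV ?groupM // fix_h left_actKV.
- by rewrite -left_actM // conjgC left_actM // fix_hg.
Qed.

Lemma mem_Horbit y : y \in Hor y.
Proof. by apply/imfsetP; exists 1; rewrite ?group1 ?left_act1. Qed.

Lemma Horbit_act h y : h \in H -> Hor (act h y) = Hor y.
Proof.
move=> hH; have hG := subsetP sHG h hH.
apply/fsetP => z; apply/imfsetP/imfsetP => -[h' h'H ->] /=;
  have h'G := subsetP sHG h' h'H.
- by exists (h' * h); rewrite ?groupM ?left_actM.
- by exists (h' * h^-1); rewrite ?groupM ?groupV ?left_actM ?groupV ?left_actKV.
Qed.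

Lemma Horbit_eqP y z : Hor y = Hor z <-> exists2 h, h \in H & y = act h z.
Proof.
split=> [eq_yz | [h hH ->]]; last exact: Horbit_act.
have /imfsetP[h hH ->] : y \in Hor z by rewrite -eq_yz mem_Horbit.
by exists h.
Qed.

Lemma card_stab_in_act h y : h \in H ->
  #|stab_in H act (act h y)| = #|stab_in H act y|.
Proof.
move=> hH; have stabH : stab_in H act y = stab_in G act y :&: H.
  apply/setP => k; rewrite !inE.
  by case kH: (k \in H); rewrite ?andbF ?andbT //= (subsetP sHG k kH).
rewrite stab_in_act ?(subsetP sHG) // stabH -{1}(conjGid (groupVr hH)) -conjIg.
exact: cardJg.
Qed.

Lemma card_stab_in_Horbit y z : Hor y = Hor z ->
  #|stab_in H act y| = #|stab_in H act z|.
Proof. by case/Horbit_eqP=> h hH ->; exact: card_stab_in_act. Qed.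

Lemma all_card_stab_in_Horbit d y :
  all (fun z => #|stab_in H act z| == d) (enum_fset (Hor y)) =
  (#|stab_in H act y| == d).
Proof.
apply/allP/idP => [|stab_d z]; first by apply; exact: mem_Horbit.
by case/imfsetP => h hH -> /=; rewrite card_stab_in_act.
Qed.

Lemma marked_countE x0 d :
  marked_count G H act x0 d =
  #|` [fset Hor (act g x0) | g in [set g in G | #|stab_in H act (act g x0)| == d]]|.
Proof.
congr #|` _|; apply/fsetP => O; rewrite !inE; apply/andP/imfsetP => /=.
- case=> /imfsetP[g gG ->] /=; rewrite all_card_stab_in_Horbit => stab_d.
  by exists g; rewrite ?inE ?gG.
- case=> g /setIdP[gG stab_d] ->; rewrite all_card_stab_in_Horbit stab_d.
  by split=> //; apply/imfsetP; exists g.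
Qed.

Section BasePoint.

Variables (Gj : {group gT}) (x0 : T).
Hypothesis sGjG : Gj \subset G.
Hypothesis stab_x0 : forall g, g \in G -> (act g x0 = x0 <-> g \in Gj).

Local Notation level d := [set g in G | #|Gj :^ g^-1 :&: H| == d].

Lemma stab_in_base : stab_in G act x0 = Gj.
Proof.
apply/setP => g; rewrite inE; apply/andP/idP => [[gG /eqP /(stab_x0 gG)] // | gGj].
have gG := subsetP sGjG g gGj.
by split; last exact/eqP/(stab_x0 gG).
Qed.

Lemma card_stab_in_base g : g \in G ->
  #|stab_in H act (act g x0)| = #|Gj :^ g^-1 :&: H|.
Proof. by move=> gG; rewrite stab_in_act // stab_in_base. Qed.

Lemma act_base_eq g g' : g \in G -> g' \in G ->
  act g x0 = act g' x0 <-> g \in g' *: Gj.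
Proof.
move=> gG g'G; rewrite mem_lcoset -(stab_x0 (groupM (groupVr g'G) gG)).
rewrite left_actM ?groupV //.
split=> [-> | fix_x0]; first exact: left_actKV.
by rewrite -{2}fix_x0 -left_actM ?groupV // mulgV left_act1.
Qed.

Lemma Horbit_base_eq g g0 : g \in G -> g0 \in G ->
  Hor (act g x0) = Hor (act g0 x0) <-> g \in H * (g0 *: Gj).
Proof.
move=> gG g0G; rewrite Horbit_eqP; split=> [[h hH e] | /mulsgP[h u hH ug0 ->]].
  have hG := subsetP sHG h hH.
  apply/mulsgP; exists h (h^-1 * g); rewrite ?mulKVg //.
  apply/(act_base_eq (groupM (groupVr hG) gG) g0G).
  by rewrite left_actM ?groupV // e left_actKV.
have uG : u \in G.
  by move: ug0; rewrite mem_lcoset => /(subsetP sGjG); rewrite groupMl ?groupV.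
have eq_u : act u x0 = act g0 x0 by apply/(act_base_eq uG g0G).
by exists h; rewrite // left_actM ?(subsetP sHG h hH) // eq_u.
Qed.

Lemma Horbit_fiber d g0 : g0 \in level d ->
  [set g in level d | Hor (act g x0) == Hor (act g0 x0)] = H * (g0 *: Gj).
Proof.
case/setIdP=> g0G d_g0; apply/setP => g; rewrite !inE.
apply/idP/idP => [/andP[/andP[gG _] /eqP /(Horbit_base_eq gG g0G)] // | gHG].
have gG : g \in G.
  case/mulsgP: gHG => h u hH; rewrite mem_lcoset => /(subsetP sGjG) ug0 ->.
  by rewrite groupM ?(subsetP sHG h hH) // -(mulKVg g0 u) groupM.
have eq_Hor := (Horbit_base_eq gG g0G).2 gHG.
rewrite gG eq_Hor eqxx andbT -card_stab_in_base //.
by rewrite (card_stab_in_Horbit eq_Hor) card_stab_in_base.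
Qed.

Lemma mul_card_marked d :
  (d * #|level d| = marked_count G H act x0 d * (#|H| * #|Gj|))%N.
Proof.
have -> : marked_count G H act x0 d = #|` [fset Hor (act g x0) | g in level d]|.
  have stab_d : [set g in G | #|stab_in H act (act g x0)| == d] = level d.
    apply/setP => g; rewrite !inE.
    by case: (boolP (g \in G)) => //= gG; rewrite card_stab_in_base.
  by rewrite marked_countE stab_d.
apply: mul_card_uniform_fibers => g0 g0A; rewrite Horbit_fiber //.
by case/setIdP: g0A => _ /eqP <-; rewrite mulnC mul_card_double_coset.
Qed.

End BasePoint.

End SubgroupOrbits.

Theorem proposition3p5 (gT : finGroupType) (G H Gj : {group gT})
    (T : choiceType) (act : gT -> T -> T) (x0 : T) (Omega : {set gT}) (l : gT) :
  is_left_action G act ->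
  faithful_action G act ->
  H \subset G ->
  (* x0 lies over the branch value q_j, of type C_j = class of Gj *)
  Gj \subset G -> cyclic Gj -> Gj :!=: 1%g ->
  (forall g, g \in G -> (act g x0 = x0 <-> g \in Gj)) ->
  (* Omega is a left transversal of N_G(Gj) in G *)
  is_transversal Omega (lcosets 'N_G(Gj) G) G ->
  (* l = l_k is a chosen element of the class L^j_k *)
  l \in Omega ->
  let d := #|(Gj :^ l^-1)%g :&: H| in
  let L := [set l' in Omega | #|(Gj :^ l'^-1)%g :&: H| == d] in
  ((marked_count G H act x0 d)%:R : rat) =
    (#|L|%:R * (#|'N_G(Gj) : Gj|)%g%:R * d%:R / #|H|%:R)%R.
Proof.
move=> actG _ sHG sGjG _ _ stab_x0 trO _ d L.
have card_level : #|[set g in G | #|Gj :^ g^-1 :&: H| == d]| = (#|L| * #|'N_G(Gj)|)%N.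
  apply: (card_transversal_rinvariant (subsetIl _ _) trO) => g n _ /setIP[_ nN].
  by rewrite conjsgV_mulg_norm.
have card_N : (#|Gj| * #|'N_G(Gj) : Gj| = #|'N_G(Gj)|)%N.
  by apply: Lagrange; rewrite subsetI sGjG normG.
have count_eq : (#|L| * #|'N_G(Gj) : Gj| * d = marked_count G H act x0 d * #|H|)%N.
  apply/eqP; rewrite -(eqn_pmul2r (cardG_gt0 Gj)); apply/eqP; rewrite -[RHS]mulnA.
  rewrite -(mul_card_marked actG sHG sGjG stab_x0) card_level -card_N.
  by rewrite [RHS]mulnC [(#|Gj| * _)%N]mulnC !mulnA mulnAC.
have H_neq0 : (#|H|%:R : rat) != 0%R by rewrite pnatr_eq0 -lt0n cardG_gt0.
by rewrite -!natrM count_eq natrM mulfK.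
Qed.
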